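(* The functor $\mathrm K\colon\mathbf{Set}\to\mathbf{Sgp}_{\mathbb C^\theta}$ defined by $\mathrm K(X)=((\mathrm L^+(X),\mu_X),\Delta_X)$ and $\mathrm K(f)=\mathrm L^+(f)$ is not an equivalence of categories.
   Context: For a set $X$, $\mathrm L^+(X)=\coprod_{n>0}X^n$ is the set of non-empty lists $[x_1,\dots,x_n]$; $\mathrm L^+(f)[x_1,\dots,x_n]=[f(x_1),\dots,f(x_n)]$. $\mu_X\colon\mathrm L^+(\mathrm L^+(X))\to\mathrm L^+(X)$ is concatenation, so $(\mathrm L^+(X),\mu_X)$ is the free semigroup on $X$ (product = concatenation). $\Delta_X[x_1,\dots,x_n]=[[x_1,\dots,x_n],[x_2,\dots,x_n],\dots,[x_n]]$ and $\varepsilon_X[x_1,\dots,x_n]=x_1$. $\mathbf{Sgp}$ is the category of semigroups. $\mathbb C^\theta$ is the comonad on $\mathbf{Sgp}$ sending a semigroup $(X,\cdot)$ to the set $\mathrm L^+(X)$ with the semigroup product $[x_1,\dots,x_n]\ast[y_1,\dots,y_m]=[x_1y_1,x_2y_1,\dots,x_ny_1,y_1,y_2,\dots,y_m]$, acting on morphisms by $\mathrm L^+$, with comultiplication $\Delta_X$ and counit $\varepsilon_X$. $\mathbf{Sgp}_{\mathbb C^\theta}$ is the category of $\mathbb C^\theta$-coalgebras: semigroups $Y$ with a semigroup morphism $\delta\colon Y\to\mathrm C^\theta(Y)$ satisfying $\Delta_Y\delta=\mathrm L^+(\delta)\delta$ and $\varepsilon_Y\delta=\mathrm{id}_Y$,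 with morphisms the semigroup morphisms commuting with the coactions. (For each set $X$, $\Delta_X$ is a semigroup morphism from $(\mathrm L^+(X),\mu_X)$ to $\mathrm C^\theta(\mathrm L^+(X),\mu_X)$, so $\mathrm K$ is well defined.) *)

From Stdlib Require Import List.
Import ListNotations.
Set Implicit Arguments.

(** L^+(X): the non-empty list [x1; ...; xn] is represented as (x1, [x2;...;xn]). *)
Definition Lp (X : Type) : Type := (X * list X)%type.

Definition Lmap {X Y : Type} (f : X -> Y) (w : Lp X) : Lp Y :=
  (f (fst w), map f (snd w)).

Definition Lcat {X : Type} (u v : Lp X) : Lp X :=
  (fst u, snd u ++ fst v :: snd v).

Fixpoint suffixes {X : Type} (l : list X) : list (Lp X) :=
  match l with
  | [] => []
  | y :: l' => (y, l') :: suffixes l'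
  end.

(** Delta_X [x1..xn] = [[x1..xn],[x2..xn],...,[xn]] *)
Definition Ldelta {X : Type} (w : Lp X) : Lp (Lp X) := (w, suffixes (snd w)).

Definition Leps {X : Type} (w : Lp X) : X := fst w.

(** The product of C^theta(X,.) :
    [x1..xn] * [y1..ym] = [x1 y1, ..., xn y1, y1, ..., ym] *)
Definition thprod {X : Type} (op : X -> X -> X) (u v : Lp X) : Lp X :=
  (op (fst u) (fst v), map (fun z => op z (fst v)) (snd u) ++ fst v :: snd v).

(** Semigroups (possibly empty). *)
Record Sgp : Type := {
  sg_car :> Type;
  sg_op : sg_car -> sg_car -> sg_car;
  sg_assoc : forall a b c, sg_op (sg_op a b) c = sg_op a (sg_op b c)
}.

Record Coalg : Type := {
  co_sg : Sgp;
  co_act : sg_car co_sg -> Lp (sg_car co_sg);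
  co_hom : forall a b, co_act (sg_op co_sg a b)
                       = thprod (sg_op co_sg) (co_act a) (co_act b);
  co_coassoc : forall y, Ldelta (co_act y) = Lmap co_act (co_act y);
  co_counit : forall y, Leps (co_act y) = y
}.

Definition Ccar (A : Coalg) : Type := sg_car (co_sg A).

Definition is_coalg_hom (A B : Coalg) (f : Ccar A -> Ccar B) : Prop :=
  (forall a b, f (sg_op (co_sg A) a b) = sg_op (co_sg B) (f a) (f b)) /\
  (forall y, co_act B (f y) = Lmap f (co_act A y)).

Lemma Lcat_assoc (X : Type) (u v w : Lp X) :
  Lcat (Lcat u v) w = Lcat u (Lcat v w).
Proof.
  destruct u as [x l], v as [y m], w as [z n]; unfold Lcat; simpl.
  now rewrite <- app_assoc.
Qed.

Definition freeSgp (X : Type) : Sgp :=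
  {| sg_car := Lp X; sg_op := @Lcat X; sg_assoc := @Lcat_assoc X |}.

Lemma suffixes_app (X : Type) (l m : list X) (y : X) :
  suffixes (l ++ y :: m) =
  map (fun s => Lcat s (y, m)) (suffixes l) ++ (y, m) :: suffixes m.
Proof.
  induction l as [|a l IH]; simpl; auto.
  rewrite IH. reflexivity.
Qed.

Lemma Ldelta_hom (X : Type) (u v : Lp X) :
  Ldelta (Lcat u v) = thprod (@Lcat X) (Ldelta u) (Ldelta v).
Proof.
  destruct u as [x l], v as [y m]; unfold Ldelta, Lcat, thprod; simpl.
  rewrite suffixes_app. reflexivity.
Qed.

Lemma suffixes_suffixes (X : Type) (l : list X) :
  suffixes (suffixes l) = map Ldelta (suffixes l).
Proof.
  induction l as [|a l IH]; simpl; auto.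
  rewrite IH. reflexivity.
Qed.

Lemma Ldelta_coassoc (X : Type) (w : Lp X) :
  Ldelta (Ldelta w) = Lmap Ldelta (Ldelta w).
Proof.
  destruct w as [x l]; unfold Ldelta, Lmap; simpl.
  rewrite suffixes_suffixes. reflexivity.
Qed.

Lemma Ldelta_counit (X : Type) (w : Lp X) : Leps (Ldelta w) = w.
Proof. reflexivity. Qed.

Definition K (X : Type) : Coalg :=
  {| co_sg := freeSgp X;
     co_act := @Ldelta X;
     co_hom := @Ldelta_hom X;
     co_coassoc := @Ldelta_coassoc X;
     co_counit := @Ldelta_counit X |}.

Lemma suffixes_map (X Y : Type) (f : X -> Y) (l : list X) :
  suffixes (map f l) = map (Lmap f) (suffixes l).
Proof.
  induction l as [|a l IH]; simpl; auto.
  rewrite IH. reflexivity.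
Qed.

Lemma K_hom (X Y : Type) (f : X -> Y) :
  is_coalg_hom (K X) (K Y) (Lmap f).
Proof.
  split.
  - intros [x l] [y m]; unfold Lmap, Lcat; simpl. now rewrite map_app.
  - intros [x l]; change (Ldelta (Lmap f (x, l)) = Lmap (Lmap f) (Ldelta (x, l))).
    unfold Ldelta, Lmap; simpl. now rewrite suffixes_map.
Qed.

(** K : Set -> Sgp_{C^theta} is an equivalence of categories: there is a
    functor G : Sgp_{C^theta} -> Set and natural isomorphisms
    eta : Id ~= G K  and  epsilon : K G ~= Id. *)
Definition K_is_equivalence : Prop :=
  exists (G : Coalg -> Type)
         (Gm : forall (A B : Coalg) (f : Ccar A -> Ccar B),
                 is_coalg_hom A B f -> G A -> G B)
         (eta : forall X : Type, X -> G (K X))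
         (eta_inv : forall X : Type, G (K X) -> X)
         (ep : forall A : Coalg, Ccar (K (G A)) -> Ccar A)
         (ep_inv : forall A : Coalg, Ccar A -> Ccar (K (G A))),
    (forall A (f : Ccar A -> Ccar A) (p : is_coalg_hom A A f),
        (forall y, f y = y) -> forall z, Gm A A f p z = z) /\
    (forall A B C (f : Ccar A -> Ccar B) (g : Ccar B -> Ccar C)
            (h : Ccar A -> Ccar C)
            (p : is_coalg_hom A B f) (q : is_coalg_hom B C g)
            (r : is_coalg_hom A C h),
        (forall y, h y = g (f y)) ->
        forall z, Gm A C h r z = Gm B C g q (Gm A B f p z)) /\
    (forall X (x : X), eta_inv X (eta X x) = x) /\
    (forall X (z : G (K X)), eta X (eta_inv X z) = z) /\
    (forall X Y (f : X -> Y) (x : X),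
        eta Y (f x) = Gm (K X) (K Y) (Lmap f) (K_hom f) (eta X x)) /\
    (forall A, is_coalg_hom (K (G A)) A (ep A)) /\
    (forall A, is_coalg_hom A (K (G A)) (ep_inv A)) /\
    (forall A (y : Ccar A), ep A (ep_inv A y) = y) /\
    (forall A (w : Ccar (K (G A))), ep_inv A (ep A w) = w) /\
    (forall A B (h : Ccar A -> Ccar B) (p : is_coalg_hom A B h)
            (w : Ccar (K (G A))),
        h (ep A w) = ep B (Lmap (Gm A B h p) w)).

(* In K(X) the coaction of a word has as many entries as the word has letters,
   so an element whose coaction has at least two entries is a word of length at
   least two, hence a product; this survives transport along a coalgebra map
   into some K(X) that has a semigroup retraction, in particular along the
   counit of an equivalence. But every suffix-closed subsemigroup of L^+(X) is
   a subcoalgebra of K(X), and among the words over {t, f} in which every t is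
   immediately followed by f, the word tf has a two-entry coaction without
   being a product, because t is not such a word. *)
From Stdlib Require Import List Bool Eqdep_dec.
Import ListNotations.

Lemma Lmap_inj {X Y : Type} (f : X -> Y) :
  (forall a b, f a = f b -> a = b) -> forall u v, Lmap f u = Lmap f v -> u = v.
Proof.
  intros f_inj [x l] [y m]; unfold Lmap; simpl; intros E; injection E as Exy Elm.
  apply f_inj in Exy; subst y; f_equal.
  revert m Elm; induction l as [|a l IH]; intros [|b m] E; try discriminate; auto.
  injection E as Eab Elm; apply f_inj in Eab; subst b; f_equal; auto.
Qed.

Lemma Lmap_comp {X Y Z : Type} (f : X -> Y) (g : Y -> Z) (w : Lp X) :
  Lmap g (Lmap f w) = Lmap (fun x => g (f x)) w.
Proof. unfold Lmap; simpl; now rewrite map_map. Qed.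

Lemma Lmap_ext {X Y : Type} (f g : X -> Y) (w : Lp X) :
  (forall x, f x = g x) -> Lmap f w = Lmap g w.
Proof. intros E; unfold Lmap; rewrite E; f_equal; now apply map_ext. Qed.

Lemma Lmap_thprod {X Y : Type} (opX : X -> X -> X) (opY : Y -> Y -> Y)
    (f : X -> Y) (u v : Lp X) :
  (forall a b, f (opX a b) = opY (f a) (f b)) ->
  Lmap f (thprod opX u v) = thprod opY (Lmap f u) (Lmap f v).
Proof.
  intros f_hom; unfold Lmap, thprod; simpl.
  rewrite f_hom, map_app, !map_map; simpl.
  f_equal; f_equal; now apply map_ext.
Qed.

Lemma Ldelta_natural {X Y : Type} (f : X -> Y) (w : Lp X) :
  Ldelta (Lmap f w) = Lmap (Lmap f) (Ldelta w).
Proof. exact (proj2 (K_hom f) w). Qed.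

Definition decomposable {A : Coalg} (y : Ccar A) : Prop :=
  exists a b, y = sg_op (co_sg A) a b.

Lemma decomposable_of_K_retract {A : Coalg} {X : Type}
    (h : Ccar A -> Lp X) (r : Lp X -> Ccar A) :
  (forall y, Ldelta (h y) = Lmap h (co_act A y)) ->
  (forall u v, r (Lcat u v) = sg_op (co_sg A) (r u) (r v)) ->
  (forall y, r (h y) = y) ->
  forall y, snd (co_act A y) <> [] -> decomposable y.
Proof.
  intros h_act r_hom r_h y tail_y.
  destruct (h y) as [x [|z l]] eqn:Ehy.
  - exfalso; apply tail_y, (map_eq_nil h).
    specialize (h_act y); rewrite Ehy in h_act.
    now injection h_act.
  - exists (r (x, [])), (r (z, l)).
    rewrite <- r_hom; unfold Lcat; simpl; rewrite <- Ehy; symmetry; apply r_h.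
Qed.

Section SuffixClosedSubcoalgebra.

Variable X : Type.
Variable P : Lp X -> bool.
Hypothesis P_Lcat : forall u v, P u = true -> P v = true -> P (Lcat u v) = true.
Hypothesis P_suffix : forall x y l, P (x, y :: l) = true -> P (y, l) = true.

Definition sub : Type := { w : Lp X | P w = true }.

Lemma sub_inj (a b : sub) : proj1_sig a = proj1_sig b -> a = b.
Proof.
  destruct a as [a pa], b as [b pb]; simpl; intros ->.
  f_equal; apply UIP_dec, bool_dec.
Qed.

Definition sub_op (a b : sub) : sub :=
  exist _ (Lcat (proj1_sig a) (proj1_sig b))
    (P_Lcat _ _ (proj2_sig a) (proj2_sig b)).

Lemma sub_op_assoc (a b c : sub) : sub_op (sub_op a b) c = sub_op a (sub_op b c).
Proof. apply sub_inj; simpl; apply Lcat_assoc. Qed.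

Definition subSgp : Sgp :=
  {| sg_car := sub; sg_op := sub_op; sg_assoc := sub_op_assoc |}.

(* The default [d] is never returned on the suffixes of an element of [sub]. *)
Definition restrict (d : sub) (u : Lp X) : sub :=
  match bool_dec (P u) true with
  | left Pu => exist _ u Pu
  | right _ => d
  end.

Lemma restrict_val (d : sub) (u : Lp X) : P u = true -> proj1_sig (restrict d u) = u.
Proof. unfold restrict; destruct (bool_dec (P u) true); simpl; congruence. Qed.

Lemma suffixes_P (x : X) (l : list X) :
  P (x, l) = true -> Forall (fun s => P s = true) (suffixes l).
Proof.
  revert x; induction l as [|y l IH]; intros x Pxl; simpl; constructor.
  - exact (P_suffix _ _ _ Pxl).
  - exact (IH y (P_suffix _ _ _ Pxl)).
Qed.

Definition sub_act (a : sub) : Lp sub :=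
  (a, map (restrict a) (suffixes (snd (proj1_sig a)))).

Lemma sub_act_val (a : sub) :
  Lmap (@proj1_sig _ _) (sub_act a) = Ldelta (proj1_sig a).
Proof.
  destruct a as [[x l] Pa]; unfold sub_act, Lmap, Ldelta; simpl; f_equal.
  rewrite map_map, <- map_id; apply map_ext_in.
  intros s Hs; apply restrict_val.
  exact (proj1 (Forall_forall _ _) (suffixes_P x l Pa) s Hs).
Qed.

Lemma sub_act_hom (a b : sub) :
  sub_act (sub_op a b) = thprod sub_op (sub_act a) (sub_act b).
Proof.
  apply (Lmap_inj (@proj1_sig _ _) sub_inj).
  rewrite (Lmap_thprod sub_op (@Lcat X)) by reflexivity.
  rewrite !sub_act_val; apply Ldelta_hom.
Qed.

Lemma sub_act_coassoc (a : sub) : Ldelta (sub_act a) = Lmap sub_act (sub_act a).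
Proof.
  apply (Lmap_inj _ (Lmap_inj (@proj1_sig _ _) sub_inj)).
  rewrite <- Ldelta_natural, sub_act_val, Lmap_comp.
  rewrite (Lmap_ext _ (fun s : sub => Ldelta (proj1_sig s))) by exact sub_act_val.
  rewrite <- (@Lmap_comp sub _ _ (@proj1_sig _ _) Ldelta), sub_act_val.
  apply Ldelta_coassoc.
Qed.

Lemma sub_act_counit (a : sub) : Leps (sub_act a) = a.
Proof. reflexivity. Qed.

Definition subCoalg : Coalg :=
  {| co_sg := subSgp; co_act := sub_act; co_hom := sub_act_hom;
     co_coassoc := sub_act_coassoc; co_counit := sub_act_counit |}.

End SuffixClosedSubcoalgebra.

Fixpoint true_then_false (l : list bool) : bool :=
  match l with
  | [] => true
  | x :: l' =>
      implb x (match l' with false :: _ => true | _ => false end)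
      && true_then_false l'
  end.

Definition tf_word (w : Lp bool) : bool := true_then_false (fst w :: snd w).

Lemma true_then_false_app (l m : list bool) :
  true_then_false l = true -> true_then_false m = true ->
  true_then_false (l ++ m) = true.
Proof.
  induction l as [|x l IH]; simpl; auto.
  intros [Hx Hl]%andb_true_iff Hm; rewrite IH by assumption.
  destruct x, l as [|[|] l]; simpl in *; easy.
Qed.

Lemma tf_word_Lcat (u v : Lp bool) :
  tf_word u = true -> tf_word v = true -> tf_word (Lcat u v) = true.
Proof.
  destruct u as [x l], v as [y m]; exact (true_then_false_app (x :: l) (y :: m)).
Qed.

Lemma tf_word_suffix (x y : bool) (l : list bool) :
  tf_word (x, y :: l) = true -> tf_word (y, l) = true.
Proof. unfold tf_word; simpl; now intros [_ H]%andb_true_iff. Qed.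

Definition tfCoalg : Coalg := subCoalg _ _ tf_word_Lcat tf_word_suffix.

Definition tf : Ccar tfCoalg := exist _ (true, [false]) eq_refl.

Lemma tf_indecomposable : ~ decomposable tf.
Proof.
  intros ([[x l] Pu] & v & E).
  apply (f_equal (@proj1_sig _ _)) in E; unfold Lcat in E; simpl in E.
  injection E as <- Elm.
  destruct l as [|z l]; [discriminate Pu | destruct l; discriminate].
Qed.

Theorem corollary5p4 : ~ K_is_equivalence.
Proof.
  intros (G & Gm & eta & eta_inv & ep & ep_inv & H).
  destruct H as (_ & _ & _ & _ & _ & ep_hom & ep_inv_hom & ep_section & _).
  apply tf_indecomposable.
  apply (decomposable_of_K_retract (ep_inv tfCoalg) (ep tfCoalg)).
  - exact (proj2 (ep_inv_hom tfCoalg)).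
  - exact (proj1 (ep_hom tfCoalg)).
  - exact (ep_section tfCoalg).
  - discriminate.
Qed.
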